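(* Let $A\in\mathbb{C}^{n\times n}$ be positive definite (i.e. $A+A^*$ is Hermitian positive definite), let $C\in\mathbb{C}^{m\times m}$ be positive semidefinite (i.e. $C+C^*$ is Hermitian positive semidefinite), let $B\in\mathbb{C}^{m\times n}$ with $m\le n$, and let $$\mathcal{A}=\begin{bmatrix}A&B^*\\-B&C\end{bmatrix}$$ be singular, with linear system $\mathcal{A}u=b$. Write $A=A_P+A_S$ with $A_P$ positive definite and $A_S$ skew-Hermitian, $C=C_P+C_S$ with $C_P$ positive semidefinite and $C_S$ skew-Hermitian, and $B=B_P+B_S$ an arbitrary splitting. Let $P_\alpha\in\mathbb{C}^{n\times n}$ and $P_\beta\in\mathbb{C}^{m\times m}$ be Hermitian positive definite, and set $$\mathcal{P}=\begin{bmatrix}A_P&B_P^*\\-B_P&C_P\end{bmatrix},\quad \mathcal{S}=\begin{bmatrix}A_S&B_S^*\\-B_S&C_S\end{bmatrix},\quad \Sigma=\begin{bmatrix}P_\alpha&0\\0&P_\beta\end{bmatrix},$$ $$\Gamma_{\mathrm{EPSS}}=(\Sigma+\mathcal{S})^{-1}(\Sigma-\mathcal{P})(\Sigma+\mathcal{P})^{-1}(\Sigma-\mathcal{S}).$$ Suppose that for every $\lambda\in\sigma(\Gamma_{\mathrm{EPSS}})$ with $|\lambda|=1$ and $\lambda\neq 1$, and for every nonzero $r\in \mathrm{null}(C+C^* )$, $$r^*\big(P_\beta-B_SP_\alpha^{-1}B_P^*+C_SP_\beta^{-1}C_P\big)r\neq\frac{1+\lambda}{1-\lambda}\,r^*Cr.$$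 Then the EPSS iteration $u^{k+1}=\Gamma_{\mathrm{EPSS}}u^k+c$, with $c=2(\Sigma+\mathcal{S})^{-1}\Sigma(\Sigma+\mathcal{P})^{-1}b$, is semi-convergent, i.e. it converges to a solution of $\mathcal{A}u=b$ for every initial guess $u^0$.
   Context: The EPSS iteration is equivalently the two-step scheme $(\Sigma+\mathcal{P})u^{k+1/2}=(\Sigma-\mathcal{S})u^k+b$, $(\Sigma+\mathcal{S})u^{k+1}=(\Sigma-\mathcal{P})u^{k+1/2}+b$. $\sigma(\cdot)$ denotes the spectrum and $\mathrm{null}(\cdot)$ the null space. An iteration for a singular system is called semi-convergent if it converges to a solution of the system for any initial guess; the system $\mathcal{A}u=b$ is understood to be consistent (solvable). *)

From HB Require Import structures.
From mathcomp Require Import all_boot all_order all_algebra.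
From mathcomp Require Import reals.
From mathcomp Require Export complex.
Set Implicit Arguments. Unset Strict Implicit. Unset Printing Implicit Defensive.
Import Order.TTheory GRing.Theory Num.Theory.
Local Open Scope ring_scope.

Definition ctrmx (F : numClosedFieldType) (p q : nat) (M : 'M[F]_(p, q)) : 'M[F]_(q, p) :=
  map_mx (fun z => z^*) M^T.

Definition hermitian (F : numClosedFieldType) (p : nat) (H : 'M[F]_p) : Prop :=
  ctrmx H = H.

Definition skew_hermitian (F : numClosedFieldType) (p : nat) (H : 'M[F]_p) : Prop :=
  ctrmx H = - H.

Definition qform (F : numClosedFieldType) (p : nat) (H : 'M[F]_p) (x : 'cV[F]_p) : F :=
  (ctrmx x *m H *m x) 0 0.

Definition hpd (F : numClosedFieldType) (p : nat) (H : 'M[F]_p) : Prop :=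
  hermitian H /\ forall x : 'cV[F]_p, x != 0 -> 0 < qform H x.

Definition hpsd (F : numClosedFieldType) (p : nat) (H : 'M[F]_p) : Prop :=
  hermitian H /\ forall x : 'cV[F]_p, 0 <= qform H x.

Definition posdef (F : numClosedFieldType) (p : nat) (M : 'M[F]_p) : Prop :=
  hpd (M + ctrmx M).

Definition possemidef (F : numClosedFieldType) (p : nat) (M : 'M[F]_p) : Prop :=
  hpsd (M + ctrmx M).

Definition saddle (F : numClosedFieldType) (n m : nat)
  (A : 'M[F]_n) (B : 'M[F]_(m, n)) (C : 'M[F]_m) : 'M[F]_(n + m) :=
  block_mx A (ctrmx B) (- B) C.

Definition cvg_vec (R : realType) (p : nat) (u : nat -> 'cV[R[i]]_p) (l : 'cV[R[i]]_p) : Prop :=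
  forall e : R, 0 < e -> exists N : nat, forall k : nat, (N <= k)%N ->
    forall j : 'I_p, `|u k j 0 - l j 0| < (e%:C)%C.

Definition iterates (F : ringType) (p : nat) (G : 'M[F]_p) (c u0 : 'cV[F]_p) (k : nat) : 'cV[F]_p :=
  iter k (fun u => G *m u + c) u0.

Definition semi_convergent (R : realType) (p : nat) (G : 'M[R[i]]_p) (c : 'cV[R[i]]_p)
  (M : 'M[R[i]]_p) (b : 'cV[R[i]]_p) : Prop :=
  forall u0 : 'cV[R[i]]_p, exists2 ustar : 'cV[R[i]]_p,
    M *m ustar = b & cvg_vec (iterates G c u0) ustar.

From Pilot Require Import Defs.
From HB Require Import structures.
From mathcomp Require Import all_boot all_order all_algebra.
From mathcomp Require Import reals complex.
From mathcomp Require Import ring lra zify.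
Import Order.TTheory GRing.Theory Num.Theory.
Local Open Scope ring_scope.
Set Implicit Arguments. Unset Strict Implicit. Unset Printing Implicit Defensive.

(* Write M = Sigma + S and N = Sigma + P.  The EPSS matrix
   Gamma = M^-1 (Sigma - P) N^-1 (Sigma - S) does not increase the energy
   x^* M^* Sigma^-1 M x: one step lowers it by exactly 2 z^* (P + P^* ) z with
   z = N^-1 (Sigma - S) x.  Hence the eigenvalues of Gamma lie in the closed unit
   disc and the eigenvalue 1 has no Jordan block of size 2.  For an eigenvector
   with a unimodular eigenvalue lambda no energy is lost, which forces z = (0, r)
   with (C + C^* ) r = 0, and the two half-steps then give
   (1 - lambda) Q r = (1 + lambda) C r for the matrix Q of the hypothesis, which
   the hypothesis excludes.  So 1 is the only eigenvalue on the unit circle, and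
   splitting the characteristic polynomial as q (X - 1)^k with q(1) <> 0 shows that
   the powers of Gamma converge to a projection onto the fixed vectors of Gamma.
   Since 1 - Gamma = 2 M^-1 Sigma N^-1 (P + S), these fixed vectors are the null
   vectors of the saddle matrix P + S, and a solution of the system is a fixed
   point of the affine iteration, which therefore converges to a solution. *)

Section ConjugateTranspose.
Variable F : numClosedFieldType.
Implicit Types (p q : nat).

Lemma ctrmxK p q (M : 'M[F]_(p, q)) : ctrmx (ctrmx M) = M.
Proof. by apply/matrixP=> i j; rewrite !mxE conjCK. Qed.

Lemma ctrmx0 p q : ctrmx (0 : 'M[F]_(p, q)) = 0.
Proof. by apply/matrixP=> i j; rewrite !mxE conjC0. Qed.

Lemma ctrmx_eq0 p q (M : 'M[F]_(p, q)) : (ctrmx M == 0) = (M == 0).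
Proof. by rewrite -(inj_eq (can_inj (@ctrmxK _ _))) ctrmxK ctrmx0. Qed.

Lemma ctrmxD p q (M N : 'M[F]_(p, q)) : ctrmx (M + N) = ctrmx M + ctrmx N.
Proof. by apply/matrixP=> i j; rewrite !mxE rmorphD. Qed.

Lemma ctrmxN p q (M : 'M[F]_(p, q)) : ctrmx (- M) = - ctrmx M.
Proof. by apply/matrixP=> i j; rewrite !mxE rmorphN. Qed.

Lemma ctrmxZ p q a (M : 'M[F]_(p, q)) : ctrmx (a *: M) = a^* *: ctrmx M.
Proof. by apply/matrixP=> i j; rewrite !mxE rmorphM. Qed.

Lemma ctrmxM p q r (M : 'M[F]_(p, q)) (N : 'M[F]_(q, r)) :
  ctrmx (M *m N) = ctrmx N *m ctrmx M.
Proof. by rewrite /ctrmx trmx_mul map_mxM. Qed.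

Lemma ctrmx_inv p (M : 'M[F]_p) : ctrmx (invmx M) = invmx (ctrmx M).
Proof. by rewrite /ctrmx trmx_inv map_invmx. Qed.

Lemma ctrmx_block p1 p2 q1 q2 (Aul : 'M[F]_(p1, q1)) (Aur : 'M[F]_(p1, q2))
    (Adl : 'M[F]_(p2, q1)) (Adr : 'M[F]_(p2, q2)) :
  ctrmx (block_mx Aul Aur Adl Adr)
  = block_mx (ctrmx Aul) (ctrmx Adl) (ctrmx Aur) (ctrmx Adr).
Proof. by rewrite /ctrmx tr_block_mx map_block_mx. Qed.

Lemma ctrmx_col p1 p2 q (A1 : 'M[F]_(p1, q)) (A2 : 'M[F]_(p2, q)) :
  ctrmx (col_mx A1 A2) = row_mx (ctrmx A1) (ctrmx A2).
Proof. by rewrite /ctrmx tr_col_mx map_row_mx. Qed.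

Lemma ctrmx_saddle n m (A : 'M[F]_n) (B : 'M[F]_(m, n)) (C : 'M[F]_m) :
  ctrmx (saddle A B C) = saddle (ctrmx A) (- B) (ctrmx C).
Proof. by rewrite /saddle ctrmx_block ctrmxN ctrmxK opprK. Qed.

Lemma saddleD n m (A1 A2 : 'M[F]_n) (B1 B2 : 'M[F]_(m, n)) (C1 C2 : 'M[F]_m) :
  saddle (A1 + A2) (B1 + B2) (C1 + C2) = saddle A1 B1 C1 + saddle A2 B2 C2.
Proof. by rewrite /saddle add_block_mx ctrmxD opprD. Qed.

End ConjugateTranspose.

Section HermitianForms.
Variable F : numClosedFieldType.
Implicit Types (p : nat).

Definition hform p (H : 'M[F]_p) (x y : 'cV[F]_p) : F := (ctrmx x *m H *m y) 0 0.

Lemma qformE p (H : 'M[F]_p) x : qform H x = hform H x x.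
Proof. by []. Qed.

Lemma hformDr p (H : 'M[F]_p) x y z : hform H x (y + z) = hform H x y + hform H x z.
Proof. by rewrite /hform mulmxDr mxE. Qed.

Lemma hformDl p (H : 'M[F]_p) x y z : hform H (x + y) z = hform H x z + hform H y z.
Proof. by rewrite /hform ctrmxD !mulmxDl mxE. Qed.

Lemma hformZr p (H : 'M[F]_p) a x y : hform H x (a *: y) = a * hform H x y.
Proof. by rewrite /hform -scalemxAr mxE. Qed.

Lemma hformZl p (H : 'M[F]_p) a x y : hform H (a *: x) y = a^* * hform H x y.
Proof. by rewrite /hform ctrmxZ -!scalemxAl mxE. Qed.

Lemma hformNr p (H : 'M[F]_p) x y : hform H x (- y) = - hform H x y.
Proof. by rewrite /hform mulmxN mxE. Qed.

Lemma hformNl p (H : 'M[F]_p) x y : hform H (- x) y = - hform H x y.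
Proof. by rewrite /hform ctrmxN !mulNmx mxE. Qed.

Lemma hform_ctr p (H : 'M[F]_p) x y : hform (ctrmx H) x y = (hform H y x)^*.
Proof.
have conj11 (M : 'M[F]_1) : (M 0 0)^* = ctrmx M 0 0 by rewrite !mxE.
by rewrite /hform conj11 !ctrmxM ctrmxK mulmxA.
Qed.

Lemma hform_hermitian p (H : 'M[F]_p) x y :
  Defs.hermitian H -> hform H y x = (hform H x y)^*.
Proof. by move=> hH; rewrite -hform_ctr hH. Qed.

Lemma qformDr p (H : 'M[F]_p) x y :
  qform H (x + y) = qform H x + hform H x y + hform H y x + qform H y.
Proof. by rewrite !qformE hformDl !hformDr !addrA. Qed.

Lemma qformZr p (H : 'M[F]_p) a x : qform H (a *: x) = `|a| ^+ 2 * qform H x.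
Proof. by rewrite !qformE hformZl hformZr mulrA normCK [a^* * a]mulrC. Qed.

Lemma qformNr p (H : 'M[F]_p) x : qform H (- x) = qform H x.
Proof. by rewrite !qformE hformNl hformNr opprK. Qed.

Lemma qform0r p (H : 'M[F]_p) : qform H 0 = 0.
Proof. by rewrite /qform mulmx0 mxE. Qed.

Lemma qform0l p x : qform (0 : 'M[F]_p) x = 0.
Proof. by rewrite /qform mulmx0 mul0mx mxE. Qed.

Lemma qformDl p (H K : 'M[F]_p) x : qform (H + K) x = qform H x + qform K x.
Proof. by rewrite /qform mulmxDr mulmxDl mxE. Qed.

Lemma qform_ctr p (H : 'M[F]_p) x : qform (ctrmx H) x = (qform H x)^*.
Proof. exact: hform_ctr. Qed.

Lemma qform_mulmx p (H N : 'M[F]_p) x :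
  qform (ctrmx N *m H *m N) x = qform H (N *m x).
Proof. by rewrite /qform ctrmxM !mulmxA. Qed.

Lemma qform_eq_of_mulmx p (X Y : 'M[F]_p) a b r :
  a *: (X *m r) = b *: (Y *m r) -> a * qform X r = b * qform Y r.
Proof.
by move/(congr1 (hform 1%:M r)); rewrite !hformZr /hform !mulmx1 !mulmxA.
Qed.

Lemma qform_block_diag p1 p2 (H : 'M[F]_p1) (K : 'M[F]_p2) x y :
  qform (block_mx H 0 0 K) (col_mx x y) = qform H x + qform K y.
Proof.
by rewrite /qform ctrmx_col mul_row_block !mulmx0 addr0 add0r mul_row_col mxE.
Qed.

Lemma qform_inv_addB p (S X : 'M[F]_p) z :
  Defs.hermitian S -> S \in unitmx ->
  qform (invmx S) ((S + X) *m z)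
  = qform (invmx S) ((S - X) *m z) + 2%:R * qform (X + ctrmx X) z.
Proof.
move=> hS Su.
have hformSl y : hform (invmx S) (S *m z) y = (ctrmx z *m y) 0 0.
  by rewrite /hform ctrmxM hS mulmxK.
have hformSr y : hform (invmx S) y (S *m z) = (ctrmx y *m z) 0 0.
  by rewrite /hform mulmxA mulmxKV.
rewrite mulmxDl mulmxBl !qformDr hformNr hformNl qformNr !hformSl !hformSr.
rewrite ctrmxM qformDl /qform !mulmxA.
ring.
Qed.

End HermitianForms.

Lemma char_poly_trmx (R : comNzRingType) p (A : 'M[R]_p) :
  char_poly A^T = char_poly A.
Proof.
by rewrite /char_poly /char_poly_mx -map_trmx -[X in X - _]tr_scalar_mx -linearB det_tr.
Qed.

Section Eigenvectors.
Variable F : fieldType.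

Lemma eigenvalue_colP p (A : 'M[F]_p) a :
  reflect (exists2 x : 'cV_p, A *m x = a *: x & x != 0) (eigenvalue A a).
Proof.
rewrite eigenvalue_root_char -char_poly_trmx -eigenvalue_root_char.
apply: (iffP eigenvalueP) => -[v vA v0].
  by exists v^T; rewrite ?trmx_eq0 // -[A]trmxK -trmx_mul vA linearZ.
by exists v^T; rewrite ?trmx_eq0 // -trmx_mul vA linearZ.
Qed.

Lemma unitmx_of_ker p (M : 'M[F]_p) :
  (forall x : 'cV_p, M *m x = 0 -> x = 0) -> M \in unitmx.
Proof.
move=> Minj; rewrite -row_free_unit -kermx_eq0; apply: contraT => kerM.
have /eigenvalue_colP[x] : eigenvalue M 0 by rewrite /eigenvalue /eigenspace raddf0 subr0.
by rewrite scale0r => /Minj ->; rewrite eqxx.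
Qed.

End Eigenvectors.

Section Positivity.
Variable F : numClosedFieldType.
Implicit Types (p : nat).

Lemma hpd_hpsd p (H : 'M[F]_p) : hpd H -> hpsd H.
Proof.
case=> hH Hpos; split=> // x; have [->|x0] := eqVneq x 0; last exact/ltW/Hpos.
by rewrite qform0r.
Qed.

Lemma hpd_ge0 p (H : 'M[F]_p) x : hpd H -> 0 <= qform H x.
Proof. by case/hpd_hpsd. Qed.

Lemma hpdD p (H K : 'M[F]_p) : hpd H -> hpsd K -> hpd (H + K).
Proof.
move=> [hH Hpos] [hK Kge0]; split; first by rewrite /Defs.hermitian ctrmxD hH hK.
by move=> x x0; rewrite qformDl ltr_wpDr ?Hpos ?Kge0.
Qed.

Lemma hpsd0 p : hpsd (0 : 'M[F]_p).
Proof. by split=> [|x]; rewrite ?qform0l // /Defs.hermitian ctrmx0. Qed.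

Lemma hpd1 p : hpd (1%:M : 'M[F]_p).
Proof.
split; first by apply/matrixP=> i j; rewrite !mxE eq_sym rmorph_nat.
move=> x x0; have := @dotmx_is_dotmx F _ (ctrmx x).
rewrite /qform mulmx1 dotmxE ctrmx_eq0 [map_mx _ _](_ : _ = x); [exact | exact: ctrmxK].
Qed.

Lemma hpd_unitmx p (H : 'M[F]_p) : hpd H -> H \in unitmx.
Proof.
case=> _ Hpos; apply: unitmx_of_ker => x Hx; apply/eqP; apply: contraT => x0.
by have := Hpos x x0; rewrite /qform -mulmxA Hx mulmx0 mxE ltxx.
Qed.

Lemma posdef_unitmx p (M : 'M[F]_p) : posdef M -> M \in unitmx.
Proof.
case=> _ Mpos; apply: unitmx_of_ker => x Mx; apply/eqP; apply: contraT => x0.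
have := Mpos x x0; rewrite qformDl qform_ctr.
by rewrite /qform -mulmxA Mx mulmx0 mxE conjC0 addr0 ltxx.
Qed.

Lemma posdef_hpdD p (S X : 'M[F]_p) :
  hpd S -> hpsd (X + ctrmx X) -> posdef (S + X).
Proof.
move=> hS hX; have [hermS _] := hS.
by rewrite /posdef ctrmxD hermS addrACA; apply: hpdD (hpdD hS (hpd_hpsd hS)) hX.
Qed.

Lemma hpd_mulmx p (H N : 'M[F]_p) : hpd H -> N \in unitmx -> hpd (ctrmx N *m H *m N).
Proof.
move=> [hH Hpos] Nu; split; first by rewrite /Defs.hermitian !ctrmxM ctrmxK hH mulmxA.
move=> x x0; rewrite qform_mulmx; apply: Hpos.
by apply: contra x0 => /eqP Nx0; rewrite -[x](mulKmx Nu) Nx0 mulmx0.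
Qed.

Lemma hpd_inv p (H : 'M[F]_p) : hpd H -> hpd (invmx H).
Proof.
move=> hpdH; have Hu := hpd_unitmx hpdH.
have eHi : invmx H = ctrmx (invmx H) *m H *m invmx H.
  by rewrite ctrmx_inv hpdH.1 mulmxK.
by rewrite eHi; apply: hpd_mulmx; rewrite ?unitmx_inv.
Qed.

Lemma hpd_block_diag p1 p2 (H : 'M[F]_p1) (K : 'M[F]_p2) :
  hpd H -> hpd K -> hpd (block_mx H 0 0 K).
Proof.
move=> hpdH hpdK; split.
  by rewrite /Defs.hermitian ctrmx_block !ctrmx0 hpdH.1 hpdK.1.
move=> x x0; rewrite -[x]vsubmxK qform_block_diag.
have [x1_0|x1_neq0] := eqVneq (usubmx x) 0.
  have x2_neq0 : dsubmx x != 0.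
    by apply: contra x0 => /eqP x2_0; rewrite -[x]vsubmxK x1_0 x2_0 col_mx0.
  by rewrite ltr_wpDl ?hpd_ge0 ?hpdK.2.
by rewrite ltr_wpDr ?hpd_ge0 ?hpdH.2.
Qed.

Lemma hpsd_block_diag p1 p2 (H : 'M[F]_p1) (K : 'M[F]_p2) :
  hpsd H -> hpsd K -> hpsd (block_mx H 0 0 K).
Proof.
move=> [hH Hge0] [hK Kge0]; split; first by rewrite /Defs.hermitian ctrmx_block !ctrmx0 hH hK.
by move=> x; rewrite -[x]vsubmxK qform_block_diag addr_ge0.
Qed.

Lemma hpsd_null p (H : 'M[F]_p) x : hpsd H -> qform H x = 0 -> H *m x = 0.
Proof.
move=> [hH Hge0] Hx0; set k := qform 1%:M (H *m x); set u := qform H (H *m x).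
have k_ge0 : 0 <= k := hpd_ge0 _ (hpd1 p).
have u_ge0 : 0 <= u := Hge0 _.
have hxy : hform H x (H *m x) = k by rewrite /k /qform /hform ctrmxM hH mulmx1.
have hyx : hform H (H *m x) x = k by rewrite hform_hermitian // hxy geC0_conj.
(* the witness (u + 1) x - k (H x) has H-energy - k^2 (u + 2) *)
have := Hge0 ((u + 1) *: x + (- k) *: (H *m x)).
rewrite qformDr !hformZl !hformZr !qformZr Hx0 hxy hyx -/u !normCK.
rewrite rmorphN rmorphD rmorph1 /= (geC0_conj u_ge0) (geC0_conj k_ge0).
rewrite [X in 0 <= X](_ : _ = - (k ^+ 2 * (u + 2%:R))); last by ring.
rewrite oppr_ge0 => energy_le0.
have : k ^+ 2 * (u + 2%:R) = 0.
  by apply/le_anti; rewrite energy_le0 mulr_ge0 ?exprn_ge0 ?addr_ge0.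
move/eqP; rewrite mulf_eq0 orbC gt_eqF ?ltr_wpDl //= expf_eq0 /= => /eqP k0.
apply/eqP; apply: contraT => Hx_neq0.
by have := (hpd1 p).2 _ Hx_neq0; rewrite -/k k0 ltxx.
Qed.

End Positivity.

Section Nonexpansive.
Variables (F : numClosedFieldType) (p : nat) (H T : 'M[F]_p).
Hypotheses (hpdH : hpd H) (T_nonexp : forall x, qform H (T *m x) <= qform H x).

Lemma nonexpansive_eigen_le1 l (x : 'cV_p) : T *m x = l *: x -> x != 0 -> `|l| <= 1.
Proof.
move=> Tx x0; have := T_nonexp x; rewrite Tx qformZr.
by rewrite ger_pMl ?hpdH.2 // expr_le1.
Qed.

Lemma nonexpansive_index_le1 (v : 'cV_p) : T *m (T *m v - v) = T *m v - v -> T *m v = v.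
Proof.
set d := T *m v - v => Td; apply/eqP; rewrite -subr_eq0 -/d.
apply/negPn/negP => d0; have [hH Hpos] := hpdH; have qd_gt0 := Hpos d d0.
(* shift v along d so that it becomes H-orthogonal to d; T then translates it by d *)
pose w := v - (hform H d v / qform H d) *: d.
have Tv : T *m v = v + d by rewrite /d addrC subrK.
have Tw : T *m w = w + d by rewrite mulmxBr -scalemxAr Td Tv addrAC.
have dw0 : hform H d w = 0.
  by rewrite /w hformDr hformNr hformZr -qformE divfK ?gt_eqF // subrr.
have wd0 : hform H w d = 0 by rewrite hform_hermitian // dw0 conjC0.
have := T_nonexp w; rewrite Tw qformDr dw0 wd0 !addr0 gerDl.
by rewrite lt_geF.
Qed.

End Nonexpansive.

Lemma eventually_lt_of_descent (R : archiRealFieldType) (s : nat -> R) N (e d : R) :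
  0 < d -> (forall k, 0 <= s k) ->
  (forall k, (N <= k)%N -> s k < e -> s k.+1 < e) ->
  (forall k, (N <= k)%N -> e <= s k -> s k.+1 <= s k - d) ->
  exists M, forall k, (M <= k)%N -> s k < e.
Proof.
move=> d_gt0 s_ge0 stay descend.
have below j : s (N + j)%N < e \/ s (N + j)%N <= s N - j%:R * d.
  elim: j => [|j IH]; first by right; rewrite addn0 mul0r subr0.
  rewrite addnS; have [lt_e|ge_e] := ltP (s (N + j)%N) e.
    by left; rewrite stay ?leq_addr.
  case: IH => [/lt_geF|IH]; first by rewrite ge_e.
  right; apply: le_trans (descend _ (leq_addr _ _) ge_e) _.
  by rewrite -natr1 mulrDl mul1r; lra.
pose K := Num.bound (s N / d).
have sN_lt : s N < K%:R * d.
  by rewrite -ltr_pdivrMr // archi_boundP // divr_ge0 // ltW.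
exists (N + K)%N => k le_NK_k; have le_N_k : (N <= k)%N by lia.
rewrite -(subnKC le_N_k); case: (below (k - N)%N) => // sk_le.
have : K%:R * d <= (k - N)%N%:R * d by rewrite ler_pM2r // ler_nat; lia.
by have := s_ge0 (N + (k - N))%N; lra.
Qed.

Section ComplexSequences.
Variable R : realType.

Definition cvg0 (s : nat -> R[i]) :=
  forall e : R, 0 < e -> exists N, forall k, (N <= k)%N -> `|s k| < (e%:C)%C.

Lemma normc_Re (z : R[i]) : `|z| = ((complex.Re `|z|)%:C)%C.
Proof. by rewrite normc_def. Qed.

Lemma cvg0_linear_recurrence (a : R[i]) (s t : nat -> R[i]) :
  `|a| < 1 -> (forall k, s k.+1 = a * s k + t k) -> cvg0 t -> cvg0 s.
Proof.
move=> a_lt1 s_rec t_cvg0 e e_gt0; set al := complex.Re `|a|.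
have al_lt1 : al < 1 by rewrite -ltcR -normc_Re rmorph1.
have al_ge0 : 0 <= al by rewrite -lecR -normc_Re rmorph0.
(* above e, |s| then drops by at least d at each step; below e, it stays there *)
pose d := (1 - al) * e / 4%:R.
have d_gt0 : 0 < d by rewrite /d !mulr_gt0 ?invr_gt0 ?subr_gt0.
have [N t_small] := t_cvg0 d d_gt0.
have step k : (N <= k)%N -> complex.Re `|s k.+1| <= al * complex.Re `|s k| + d.
  move=> le_N_k; apply: le_trans (_ : _ <= al * complex.Re `|s k| + complex.Re `|t k|) _.
    by rewrite -lecR rmorphD rmorphM /= -!normc_Re s_rec -normrM ler_normD.
  by rewrite lerD2l ltW // -ltcR -normc_Re t_small.
have [M sM] : exists M, forall k, (M <= k)%N -> complex.Re `|s k| < e.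
  apply: (eventually_lt_of_descent (N := N) d_gt0).
  - by move=> k; rewrite -lecR -normc_Re rmorph0.
  - move=> k le_N_k sk_lt; have := step k le_N_k.
    have := ler_wpM2l al_ge0 (ltW sk_lt); rewrite /d; nra.
  - move=> k le_N_k sk_ge; have := step k le_N_k.
    rewrite /d; nra.
by exists M => k le_M_k; rewrite normc_Re ltcR sM.
Qed.

Lemma cvg_vec0P p (u : nat -> 'cV[R[i]]_p) :
  cvg_vec u 0 <-> forall j, cvg0 (fun k => u k j 0).
Proof.
split=> [u_cvg j e /u_cvg[N uN]|u_cvg e e_gt0].
  by exists N => k le_N_k; have := uN k le_N_k j; rewrite mxE subr0.
have /fin_all_exists[N uN] : forall j, exists N, forall k, (N <= k)%N ->
    `|u k j 0| < (e%:C)%C by move=> j; apply: u_cvg.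
exists (\max_j N j)%N => k le_N_k j; rewrite mxE subr0 uN //.
exact: leq_trans (leq_bigmax j) le_N_k.
Qed.

Lemma cvg_vec_shift p (u v : nat -> 'cV[R[i]]_p) (l m : 'cV[R[i]]_p) :
  (forall k, u k - l = v k - m) -> cvg_vec v m -> cvg_vec u l.
Proof.
move=> uv v_cvg e /v_cvg[N vN]; exists N => k le_N_k j.
by have /matrixP/(_ j 0) := uv k; rewrite !mxE => ->; apply: vN.
Qed.

End ComplexSequences.

Section Powers.
Variables (R : realType) (p' : nat).
Local Notation p := p'.+1.
Variable T : 'M[R[i]]_p.

Lemma horner_mx_XsubC z : horner_mx T ('X - z%:P) = T - z%:M.
Proof. by rewrite rmorphB /= horner_mx_X horner_mx_C. Qed.

Lemma horner_mx_fix (r : {poly R[i]}) (w : 'cV_p) : T *m w = w -> horner_mx T r *m w = r.[1] *: w.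
Proof.
move=> Tw; elim/poly_ind: r => [|r c IH]; first by rewrite rmorph0 mul0mx horner0 scale0r.
rewrite rmorphD rmorphM /= horner_mx_X horner_mx_C mulmxDl -mulmxE -mulmxA Tw IH.
by rewrite mul_scalar_mx hornerD hornerMX hornerC mulr1 scalerDl.
Qed.

Lemma expr_mulmx_fix k (w : 'cV_p) : T *m w = w -> T ^+ k *m w = w.
Proof.
by move=> Tw; elim: k => [|k IH]; rewrite ?expr0 ?mul1mx // exprSr -mulmxE -mulmxA Tw.
Qed.

Lemma powers_cvg0_of_roots (rs : seq R[i]) (y : 'cV_p) : {in rs, forall z, `|z| < 1} ->
  horner_mx T (\prod_(z <- rs) ('X - z%:P)) *m y = 0 ->
  cvg_vec (fun k => T ^+ k *m y) 0.
Proof.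
elim: rs y => [|z rs IH] y small_rs.
  by rewrite big_nil rmorph1 mul1mx => ->; apply/cvg_vec0P => j e e_gt0;
    exists 0%N => k _; rewrite mulmx0 mxE normr0 ltcR.
rewrite big_cons mulrC rmorphM /= horner_mx_XsubC -mulmxA => /IH IHy.
have /cvg_vec0P cvg_Tz : cvg_vec (fun k => T ^+ k *m ((T - z%:M) *m y)) 0.
  by apply: IHy => u u_rs; apply: small_rs; rewrite inE u_rs orbT.
apply/cvg_vec0P => j; apply: (cvg0_linear_recurrence (small_rs z (mem_head _ _))) (cvg_Tz j).
move=> k; suff -> : T ^+ k.+1 *m y = z *: (T ^+ k *m y) + T ^+ k *m ((T - z%:M) *m y).
  by rewrite !mxE.
by rewrite mulmxBl mul_scalar_mx mulmxBr -!scalemxAr exprSr -mulmxE mulmxA addrC subrK.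
Qed.

Lemma powers_cvg0 (r : {poly R[i]}) (y : 'cV_p) : r != 0 -> (forall z, root r z -> `|z| < 1) ->
  horner_mx T r *m y = 0 -> cvg_vec (fun k => T ^+ k *m y) 0.
Proof.
move=> r_neq0 small_roots; have [rs r_eq] := closed_field_poly_normal r.
rewrite r_eq linearZ /= -scalemxAl => /eqP; rewrite scaler_eq0 lead_coef_eq0 (negPf r_neq0).
move=> /eqP; apply: powers_cvg0_of_roots => z z_rs; apply: small_roots.
by rewrite r_eq rootZ ?lead_coef_eq0 // root_prod_XsubC.
Qed.

Hypothesis T_index_le1 : forall v : 'cV_p, T *m (T *m v - v) = T *m v - v -> T *m v = v.

Lemma fixed_of_ker_expr m (v : 'cV_p) : (T - 1) ^+ m *m v = 0 -> T *m v = v.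
Proof.
elim: m v => [|m IH] v; first by rewrite expr0 mul1mx => ->; rewrite mulmx0.
rewrite exprSr -mulmxE -mulmxA => /IH; rewrite mulmxBl mul1mx.
exact: T_index_le1.
Qed.

Hypothesis T_subunit : forall z, eigenvalue T z -> z != 1 -> `|z| < 1.

Lemma powers_cvg_sqmx (x : 'cV_p) : exists2 w, T *m w = w & cvg_vec (fun k => T ^+ k *m x) w.
Proof.
have [m [q /implyP q1 chiE]] := multiplicity_XsubC (char_poly T) 1.
have chi_neq0 : char_poly T != 0 := monic_neq0 (char_poly_monic T).
have {q1} q1_neq0 : q.[1] != 0 by have := q1 chi_neq0; rewrite rootE.
have q_neq0 : q != 0 by apply: contraNneq chi_neq0 => q0; rewrite chiE q0 mul0r.
set v := horner_mx T q *m x.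
have Tv : T *m v = v.
  apply: (@fixed_of_ker_expr m); rewrite /v mulmxA -horner_mx_XsubC -rmorphXn.
  have -> : horner_mx T (('X - 1%:P) ^+ m) *m horner_mx T q = horner_mx T (char_poly T).
    by rewrite chiE mulrC rmorphM.
  by rewrite Cayley_Hamilton mul0mx.
pose w := q.[1]^-1 *: v; have Tw : T *m w = w by rewrite -scalemxAr Tv.
have cvg_xw : cvg_vec (fun k => T ^+ k *m (x - w)) 0.
  apply: (powers_cvg0 q_neq0) => [z qz|].
    apply: T_subunit; last by apply: contraNneq q1_neq0 => <-; rewrite -rootE.
    by rewrite eigenvalue_root_char chiE rootM qz.
  by rewrite mulmxBr (horner_mx_fix _ Tw) /w scalerA mulfV // scale1r subrr.
exists w => //; apply: cvg_vec_shift cvg_xw => k.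
by rewrite mulmxBr (expr_mulmx_fix _ Tw) subr0.
Qed.

End Powers.

Lemma powers_cvg (R : realType) p (T : 'M[R[i]]_p) :
  (forall z, eigenvalue T z -> z != 1 -> `|z| < 1) ->
  (forall v : 'cV_p, T *m (T *m v - v) = T *m v - v -> T *m v = v) ->
  forall x : 'cV_p, exists2 w, T *m w = w & cvg_vec (fun k => T ^+ k *m x) w.
Proof.
case: p T => [|p'] T T_subunit T_index_le1 x; last exact: powers_cvg_sqmx.
by exists 0; [rewrite mulmx0 | move=> e _; exists 0%N => k _ []].
Qed.

Lemma iteratesE (F : nzRingType) p (G : 'M[F]_p) c u0 us k :
  G *m us + c = us -> iterates G c u0 k = us + G ^+ k *m (u0 - us).
Proof.
move=> us_fix; elim: k => [|k IH]; first by rewrite expr0 mul1mx addrC subrK.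
rewrite /iterates iterS -/(iterates G c u0 k) IH exprS -mulmxE -mulmxA.
by rewrite mulmxDr addrAC us_fix.
Qed.

Lemma semi_convergent_of_powers (R : realType) p (G A K : 'M[R[i]]_p) c b :
  (forall x : 'cV_p, exists2 w, G *m w = w & cvg_vec (fun k => G ^+ k *m x) w) ->
  K \in unitmx -> (forall x : 'cV_p, x - G *m x = K *m (A *m x)) -> c = K *m b ->
  (exists u, A *m u = b) -> semi_convergent G c A b.
Proof.
move=> G_cvg Ku residualE -> [us Aus] u0.
have us_fix : G *m us + K *m b = us by rewrite -Aus -residualE addrC subrK.
have [w Gw w_lim] := G_cvg (u0 - us); exists (us + w).
  have : K *m (A *m w) = 0 by rewrite -residualE Gw subrr.
  move/(congr1 (mulmx (invmx K))); rewrite mulKmx // mulmx0 => Aw0.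
  by rewrite mulmxDr Aus Aw0 addr0.
apply: cvg_vec_shift w_lim => k.
by rewrite (iteratesE _ _ us_fix) opprD addrACA subrr add0r.
Qed.

(* Entrywise, the hypotheses are the two half-steps N z = (Sigma - S) x and
   (Sigma - P) z = l (Sigma + S) x together with their images under S Sigma^-1. *)
Lemma unimodular_combination (F : comNzRingType) (l a1 a2 b1 b2 c1 c2 w : F) :
  a1 + a2 = b1 - b2 -> a1 - a2 = l * (b1 + b2) ->
  c1 + c2 = b2 - w -> c1 - c2 = l * (b2 + w) ->
  (1 + l) * (a2 + c1) = (1 - l) * (a1 + c2).
Proof.
move=> e1 e2 e3 e4; apply/eqP; rewrite -subr_eq0; apply/eqP.
transitivity (l * (a1 + a2 - (b1 - b2)) - (a1 - a2 - l * (b1 + b2))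
  + l * (c1 + c2 - (b2 - w)) + (c1 - c2 - l * (b2 + w))); first by ring.
by rewrite e1 e2 e3 e4 !subrr mulr0 !addr0 subrr.
Qed.

Section TwoStepSplitting.
Variables (F : fieldType) (p : nat) (Sigma P S : 'M[F]_p).
Local Notation N := (Sigma + P).
Local Notation M := (Sigma + S).
Local Notation Gamma := (invmx M *m (Sigma - P) *m invmx N *m (Sigma - S)).
Hypotheses (Nu : N \in unitmx) (Mu : M \in unitmx).

Lemma two_step_mulmx (x : 'cV_p) :
  M *m (Gamma *m x) = (Sigma - P) *m (invmx N *m ((Sigma - S) *m x)).
Proof. by rewrite !mulmxA mulmxV // mul1mx. Qed.

Lemma two_step_residual (x : 'cV_p) :
  x - Gamma *m x = 2%:R *: (invmx M *m Sigma *m invmx N) *m ((P + S) *m x).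
Proof.
set y := invmx N *m ((Sigma - S) *m x).
have Ny : N *m y = (Sigma - S) *m x by rewrite mulKVmx.
have NinvPS : invmx N *m ((P + S) *m x) = x - y.
  apply: (canLR (mulKmx Nu)); rewrite mulmxBr Ny -mulmxBl; congr (_ *m x).
  by apply/matrixP=> i j; rewrite !mxE; ring.
have SPy : (Sigma - P) *m y = 2%:R *: (Sigma *m y) - (Sigma - S) *m x.
  rewrite -Ny !(mulmxDl, mulNmx); apply/matrixP=> i j; rewrite !mxE; ring.
apply: (can_inj (mulKmx Mu)); rewrite -scalemxAl -scalemxAr !mulmxA mulmxV // mul1mx.
rewrite mulmxBr two_step_mulmx -/y SPy -!mulmxA NinvPS.
rewrite !(mulmxDl, mulmxDr, mulNmx, mulmxN).
by apply/matrixP=> i j; rewrite !mxE; ring.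
Qed.

Hypothesis Sigmau : Sigma \in unitmx.

Lemma two_step_unimodular_identity l (x z : 'cV_p) :
  N *m z = (Sigma - S) *m x -> (Sigma - P) *m z = l *: (M *m x) ->
  (1 + l) *: ((P + S) *m z) = (1 - l) *: ((Sigma + S *m invmx Sigma *m P) *m z).
Proof.
move=> eN eP; set L := S *m invmx Sigma.
have LSigma v : L *m (Sigma *m v) = S *m v by rewrite mulmxA mulmxKV.
have LeN := congr1 (mulmx L) eN; have LeP := congr1 (mulmx L) eP.
rewrite -scalemxAr !(mulmxDl, mulNmx, mulmxDr, mulmxN) !LSigma in LeN LeP.
rewrite !(mulmxDl, mulNmx) in eN eP; rewrite !(mulmxDl, mulNmx) -mulmxA.
apply/matrixP=> i j; rewrite !mxE; apply: (unimodular_combination (l := l)).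
- by move/matrixP/(_ i j): eN; rewrite !mxE => ->.
- by move/matrixP/(_ i j): eP; rewrite !mxE => ->.
- by move/matrixP/(_ i j): LeN; rewrite !mxE => ->.
- by move/matrixP/(_ i j): LeP; rewrite !mxE => ->.
Qed.

End TwoStepSplitting.

Section TwoStepEnergy.
Variables (F : numClosedFieldType) (p : nat) (Sigma P S : 'M[F]_p).
Local Notation N := (Sigma + P).
Local Notation M := (Sigma + S).
Local Notation Gamma := (invmx M *m (Sigma - P) *m invmx N *m (Sigma - S)).
Local Notation H := (ctrmx M *m invmx Sigma *m M).
Hypotheses (hpdSigma : hpd Sigma) (S_skew : ctrmx S = - S) (P_psd : hpsd (P + ctrmx P)).

Lemma two_step_N_unitmx : N \in unitmx.
Proof. exact/posdef_unitmx/posdef_hpdD. Qed.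

Lemma two_step_M_unitmx : M \in unitmx.
Proof. by apply/posdef_unitmx/posdef_hpdD; rewrite // S_skew subrr; apply: hpsd0. Qed.

Lemma two_step_SigmaBS_unitmx : Sigma - S \in unitmx.
Proof.
by apply/posdef_unitmx/posdef_hpdD; rewrite // ctrmxN S_skew opprK addNr; apply: hpsd0.
Qed.

Lemma two_step_hpd : hpd H.
Proof. exact/hpd_mulmx/two_step_M_unitmx/hpd_inv. Qed.

Lemma two_step_energy x :
  qform H x = qform H (Gamma *m x)
              + 2%:R * qform (P + ctrmx P) (invmx N *m ((Sigma - S) *m x)).
Proof.
have [hSigma _] := hpdSigma; have Sigmau := hpd_unitmx hpdSigma.
rewrite !qform_mulmx two_step_mulmx ?two_step_N_unitmx ?two_step_M_unitmx //.
rewrite qform_inv_addB // S_skew subrr qform0l mulr0 addr0.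
by rewrite -{1}[(Sigma - S) *m x](mulKVmx two_step_N_unitmx) qform_inv_addB.
Qed.

Lemma two_step_precond_unitmx : 2%:R *: (invmx M *m Sigma *m invmx N) \in unitmx.
Proof.
rewrite unitmxZ ?unitfE ?pnatr_eq0 // !unitmx_mul !unitmx_inv.
by rewrite two_step_M_unitmx two_step_N_unitmx hpd_unitmx.
Qed.

Lemma two_step_nonexpansive x : qform H (Gamma *m x) <= qform H x.
Proof.
by rewrite [leRHS](two_step_energy x) lerDl mulr_ge0 ?ler0n ?P_psd.2.
Qed.

End TwoStepEnergy.

Lemma dsubmx_mul_col0 (R : pzRingType) m1 m2 n1 n2 (X : 'M[R]_(m1 + m2, n1 + n2))
    (r : 'cV[R]_n2) :
  dsubmx (X *m col_mx 0 r) = drsubmx X *m r.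
Proof. by rewrite -[X]submxK mul_block_col col_mxKd mulmx0 add0r block_mxKdr. Qed.

Section EPSS.
Variables (F : numClosedFieldType) (n m : nat).
Variables (AP AS : 'M[F]_n) (BP BS : 'M[F]_(m, n)) (CP CS : 'M[F]_m).
Variables (Palpha : 'M[F]_n) (Pbeta : 'M[F]_m).
Hypotheses (AP_pd : posdef AP) (AS_skew : skew_hermitian AS).
Hypotheses (CP_psd : possemidef CP) (CS_skew : skew_hermitian CS).
Hypotheses (hpdPalpha : hpd Palpha) (hpdPbeta : hpd Pbeta).
Local Notation Pc := (saddle AP BP CP).
Local Notation Sc := (saddle AS BS CS).
Local Notation Sigma := (block_mx Palpha 0 0 Pbeta).
Local Notation Gamma :=
  (invmx (Sigma + Sc) *m (Sigma - Pc) *m invmx (Sigma + Pc) *m (Sigma - Sc)).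
Local Notation Q := (Pbeta - BS *m invmx Palpha *m ctrmx BP + CS *m invmx Pbeta *m CP).

Lemma EPSS_Sigma_hpd : hpd Sigma.
Proof. exact: hpd_block_diag. Qed.

Lemma EPSS_Sc_skew : ctrmx Sc = - Sc.
Proof.
by rewrite ctrmx_saddle AS_skew CS_skew /saddle opp_block_mx ctrmxN.
Qed.

Lemma EPSS_Pc_hermitian_part :
  Pc + ctrmx Pc = block_mx (AP + ctrmx AP) 0 0 (CP + ctrmx CP).
Proof. by rewrite ctrmx_saddle -saddleD subrr /saddle ctrmx0 oppr0. Qed.

Lemma EPSS_Pc_psd : hpsd (Pc + ctrmx Pc).
Proof. by rewrite EPSS_Pc_hermitian_part; apply: hpsd_block_diag (hpd_hpsd _) _. Qed.

Lemma EPSS_Schur_block : drsubmx (Sigma + Sc *m invmx Sigma *m Pc) = Q.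
Proof.
rewrite invmx_block_diag; last exact/hpd_unitmx/EPSS_Sigma_hpd.
rewrite !mulmx_block !(mulmx0, mul0mx, addr0, add0r) add_block_mx block_mxKdr.
by rewrite !mulNmx addrA.
Qed.

Lemma EPSS_unimodular_eigenvector l (x : 'cV_(n + m)) :
  Gamma *m x = l *: x -> x != 0 -> `|l| = 1 ->
  exists r, [/\ r != 0, (CP + ctrmx CP) *m r = 0 &
    (1 + l) * qform (CP + CS) r = (1 - l) * qform Q r].
Proof.
move=> Gx x0 l1; have Sigma_hpd := EPSS_Sigma_hpd; have Pc_psd := EPSS_Pc_psd.
have Nu := two_step_N_unitmx Sigma_hpd Pc_psd.
have Mu := two_step_M_unitmx Sigma_hpd EPSS_Sc_skew.
set z := invmx (Sigma + Pc) *m ((Sigma - Sc) *m x).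
have Nz : (Sigma + Pc) *m z = (Sigma - Sc) *m x by rewrite mulKVmx.
have Pz : (Sigma - Pc) *m z = l *: ((Sigma + Sc) *m x).
  by rewrite -two_step_mulmx // Gx scalemxAr.
(* an eigenvector on the unit circle loses no energy, so z is isotropic for Pc + Pc^* *)
have qz0 : qform (Pc + ctrmx Pc) z = 0.
  have := two_step_energy Sigma_hpd EPSS_Sc_skew Pc_psd x.
  rewrite Gx qformZr l1 expr1n mul1r -{1}[qform _ x]addr0 => /addrI/esym/eqP.
  by rewrite mulf_eq0 pnatr_eq0 => /eqP.
rewrite -[z]vsubmxK EPSS_Pc_hermitian_part qform_block_diag in qz0.
move/eqP: qz0; rewrite paddr_eq0 ?(hpd_ge0 _ AP_pd) ?CP_psd.2 // => /andP[/eqP qz1 /eqP qz2].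
have z1_0 : usubmx z = 0.
  by apply/eqP; apply: contraT => /AP_pd.2; rewrite qz1 ltxx.
exists (dsubmx z); split; last 1 first.
- apply: qform_eq_of_mulmx.
  move: (two_step_unimodular_identity (hpd_unitmx Sigma_hpd) Nz Pz).
  move/(congr1 dsubmx); rewrite !linearZ /= -[z]vsubmxK z1_0 !dsubmx_mul_col0.
  by rewrite col_mxKd EPSS_Schur_block -saddleD /saddle block_mxKdr => ->.
- apply: contra x0 => /eqP z2_0; have : (Sigma - Sc) *m x = 0.
    by rewrite -Nz -[z]vsubmxK z1_0 z2_0 col_mx0 mulmx0.
  move/(congr1 (mulmx (invmx (Sigma - Sc)))).
  by rewrite mulKmx ?mulmx0 ?(two_step_SigmaBS_unitmx Sigma_hpd EPSS_Sc_skew) // => ->.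
- exact: hpsd_null CP_psd qz2.
Qed.

End EPSS.

Theorem theorem1 (R : realType) (n m : nat)
  (A AP AS : 'M[R[i]]_n) (B BP BS : 'M[R[i]]_(m, n)) (C CP CS : 'M[R[i]]_m)
  (Palpha : 'M[R[i]]_n) (Pbeta : 'M[R[i]]_m) (b : 'cV[R[i]]_(n + m)) :
  (m <= n)%N ->
  posdef A -> possemidef C ->
  \det (saddle A B C) = 0 ->
  (exists u : 'cV[R[i]]_(n + m), saddle A B C *m u = b) ->
  A = AP + AS -> posdef AP -> skew_hermitian AS ->
  C = CP + CS -> possemidef CP -> skew_hermitian CS ->
  B = BP + BS ->
  hpd Palpha -> hpd Pbeta ->
  let Pc := saddle AP BP CP in
  let Sc := saddle AS BS CS in
  let Sigma := block_mx Palpha 0 0 Pbeta in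
  let Gamma := invmx (Sigma + Sc) *m (Sigma - Pc) *m invmx (Sigma + Pc) *m (Sigma - Sc) in
  let c := 2%:R *: (invmx (Sigma + Sc) *m Sigma *m invmx (Sigma + Pc) *m b) in
  (forall lambda : R[i], eigenvalue Gamma lambda -> `|lambda| = 1 -> lambda != 1 ->
     forall r : 'cV[R[i]]_m, r != 0 -> (C + ctrmx C) *m r = 0 ->
       qform (Pbeta - BS *m invmx Palpha *m ctrmx BP + CS *m invmx Pbeta *m CP) r
         != (1 + lambda) / (1 - lambda) * qform C r) ->
  semi_convergent Gamma c (saddle A B C) b.
Proof.
move=> _ _ _ _ solvable eA AP_pd AS_skew eC CP_psd CS_skew eB hpdPa hpdPb.
have AE : saddle A B C = saddle AP BP CP + saddle AS BS CS by rewrite eA eB eC saddleD.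
move=> Pc Sc Sigma Gamma c unimodular_hyp.
have Sigma_hpd : hpd Sigma := EPSS_Sigma_hpd hpdPa hpdPb.
have Sc_skew : ctrmx Sc = - Sc by apply: EPSS_Sc_skew.
have Pc_psd : hpsd (Pc + ctrmx Pc) by apply: EPSS_Pc_psd.
have H_hpd := two_step_hpd Sigma_hpd Sc_skew.
have Gamma_nonexp := two_step_nonexpansive Sigma_hpd Sc_skew Pc_psd.
have Nu := two_step_N_unitmx Sigma_hpd Pc_psd.
have Mu := two_step_M_unitmx Sigma_hpd Sc_skew.
pose K := 2%:R *: (invmx (Sigma + Sc) *m Sigma *m invmx (Sigma + Pc)).
apply: (@semi_convergent_of_powers R (n + m) Gamma (saddle A B C) K c b _ _ _ _ solvable).
- apply: powers_cvg; last exact: nonexpansive_index_le1 H_hpd Gamma_nonexp.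
  move=> z z_eig z_neq1; have /eigenvalue_colP[x Gx x0] := z_eig.
  rewrite lt_neqAle (nonexpansive_eigen_le1 H_hpd Gamma_nonexp Gx x0) andbT.
  apply/negP => /eqP z_unit.
  have [r [r_neq0 CPr identity]] :=
    EPSS_unimodular_eigenvector AP_pd AS_skew CP_psd CS_skew hpdPa hpdPb Gx x0 z_unit.
  have CCr : (C + ctrmx C) *m r = 0.
    by rewrite eC ctrmxD CS_skew addrACA subrr addr0.
  move: (unimodular_hyp z z_eig z_unit z_neq1 r r_neq0 CCr).
  rewrite eC mulrAC identity [_ * qform _ r]mulrC mulfK ?eqxx //.
  by rewrite subr_eq0 eq_sym.
- exact: two_step_precond_unitmx.
- by move=> x; rewrite AE; exact: (two_step_residual Nu Mu x).
- by rewrite /c scalemxAl.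
Qed.
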